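(* Let $G=(V,E)$ be a graph of order $n$ such that $\tau(G)=\tau>\frac{n}{2}$. If its $\tau$-set $W$ satisfies $G[W]\cong\overline{K_\tau}$ (i.e. $W$ is an independent set), then $\beta_p(G)=\tau$.
   Context: All graphs are finite, simple, undirected and connected. Two vertices $u,v$ are twins if $N(u)\setminus\{v\}=N(v)\setminus\{u\}$; the twin number $\tau(G)$ is the maximum cardinality of an equivalence class of the twin relation; a $\tau$-set is a set of pairwise twin vertices of cardinality $\tau(G)$ (unique when $\tau(G)>n/2$). For a partition $\Pi=\{S_1,\dots,S_k\}$ of $V(G)$, $r(u|\Pi)=(d(u,S_1),\dots,d(u,S_k))$ with $d(u,S)=\min_{w\in S}d(u,w)$; $\Pi$ is locating if $r(u|\Pi)\ne r(v|\Pi)$ for all distinct $u,v$; $\beta_p(G)$ is the minimum size of a locating partition. *)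

From mathcomp Require Import all_boot.
Set Implicit Arguments. Unset Strict Implicit. Unset Printing Implicit Defensive.

Section Graphs.
Variables (T : finType) (e : rel T).

Definition simple_graph : Prop := symmetric e /\ irreflexive e.
Definition connected_graph : Prop := forall x y : T, connect e x y.

Definition nbhd (u : T) : {set T} := [set w | e u w].

Definition ball (k : nat) (u : T) : {set T} :=
  iter k (fun A => A :|: [set y | [exists x in A, e x y]]) [set u].

(* d(u,S) = min_{w in S} d(u,w): least k such that the k-ball meets S
   (in a connected graph, and S nonempty, it is < #|T|) *)
Definition dist_set (u : T) (S : {set T}) : nat :=
  find (fun k => [exists w in S, w \in ball k u]) (iota 0 #|T|).

Definition dist (u v : T) : nat := dist_set u [set v].

Definition twins (u v : T) : bool := (nbhd u :\ v) == (nbhd v :\ u).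

Definition twin_class (u : T) : {set T} := [set v | twins u v].

Definition twin_number : nat := \max_(u : T) #|twin_class u|.

Definition tau_set (W : {set T}) : bool :=
  [forall u in W, forall v in W, twins u v] && (#|W| == twin_number).

(* locating partition: a partition of V(G) such that r(u|P) <> r(v|P)
   for all distinct u,v, i.e. some class S has d(u,S) <> d(v,S) *)
Definition locating_partition (P : {set {set T}}) : bool :=
  partition P [set: T] &&
  [forall u, forall v, (u != v) ==> [exists S in P, dist_set u S != dist_set v S]].

(* partition dimension: minimum size of a locating partition (the partition
   into singletons is locating, so #|T| is an upper bound) *)
Definition partition_dim : nat :=
  \big[minn/#|T|]_(P : {set {set T}} | locating_partition P) #|P|.

Definition independent (W : {set T}) : bool :=
  [forall u in W, forall v in W, ~~ e u v].

End Graphs.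

(* Twins are at equal distance from every set avoiding both of them, so a
   locating partition puts the vertices of the tau-set W in distinct classes.
   Conversely, fewer than tau vertices lie outside W: match them injectively
   with W minus a vertex w0 and let each class be a vertex of W together with
   its partner.  A vertex u outside W is told apart from its partner w: if u
   has a neighbour in W it is adjacent to all of W, hence at distance 1 from
   the class {w0}, unlike w since W is independent; otherwise u and w are not
   twins (W is a largest twin class), and a vertex y adjacent to exactly one of
   them is at distance 1 from that one while the other sees neither y nor the
   vertex of W in y's class. *)

From mathcomp Require Import all_boot order zify.
Set Implicit Arguments. Unset Strict Implicit. Unset Printing Implicit Defensive.
Import Order.TTheory.

Section Distances.
Variables (T : finType) (e : rel T).

Lemma ball0 v : ball e 0 v = [set v].
Proof. by []. Qed.

Lemma ballS k v :
  ball e k.+1 v = ball e k v :|: [set y | [exists x in ball e k v, e x y]].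
Proof. by []. Qed.

Lemma ball_center k v : v \in ball e k v.
Proof. by elim: k => [|k IHk]; rewrite ?ball0 ?set11 // ballS inE IHk. Qed.

Lemma mem_ball1 v y : (y \in ball e 1 v) = (y == v) || e v y.
Proof.
rewrite ballS ball0 !inE; congr (_ || _).
by apply/exists_inP/idP => [[x /set1P -> //] | evy]; exists v; rewrite ?set11.
Qed.

Lemma meets_ball0 a (S : {set T}) : [exists w in S, w \in ball e 0 a] = (a \in S).
Proof.
rewrite ball0; apply/exists_inP/idP => [[w wS /set1P <- //] | aS].
by exists a; rewrite ?set11.
Qed.

Lemma meets_ball1 a (S : {set T}) :
  [exists w in S, w \in ball e 1 a] = (a \in S) || [exists s in S, e a s].
Proof.
apply/exists_inP/orP => [[w wS] | [aS | /exists_inP[s sS eas]]].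
- by rewrite mem_ball1 => /orP[/eqP <- | eaw]; [left | right; apply/exists_inP; exists w].
- by exists a; rewrite ?ball_center.
- by exists s; rewrite // mem_ball1 eas orbT.
Qed.

Lemma dist_set_eq0 a (S : {set T}) : (dist_set e a S == 0) = (a \in S).
Proof.
have [k T_eq] : exists k, #|T| = k.+1.
  by exists #|T|.-1; rewrite prednK //; apply/card_gt0P; exists a.
by rewrite /dist_set T_eq /= meets_ball0; case: (a \in S).
Qed.

Lemma dist_set_eq1 a (S : {set T}) :
  1 < #|T| -> (dist_set e a S == 1) = (a \notin S) && [exists s in S, e a s].
Proof.
move=> T_gt1; have [k T_eq] : exists k, #|T| = k.+2 by exists #|T|.-2; lia.
rewrite /dist_set T_eq /= meets_ball0 meets_ball1.
by case: (a \in S); case: [exists _ in S, _].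
Qed.

Lemma dist_set_adj_neq a b s (S : {set T}) :
  a \notin S -> b \notin S -> s \in S -> e a s -> {in S, forall t, ~~ e b t} ->
  dist_set e a S != dist_set e b S.
Proof.
move=> aS bS sS eas nbS.
have T_gt1 : 1 < #|T|.
  have a_s : a != s by apply: contraNneq aS => ->.
  by move: (max_card [set a; s]); rewrite cards2 a_s.
have /eqP -> : dist_set e a S == 1.
  by rewrite dist_set_eq1 // aS; apply/exists_inP; exists s.
rewrite eq_sym dist_set_eq1 // bS /=; apply/exists_inP => -[t tS].
by apply/negP; exact: nbS.
Qed.

Lemma mem_ball_twins u v k y :
  twins e u v -> y \in ball e k u -> y != u -> y != v -> y \in ball e k v.
Proof.
move=> tw_uv; elim: k y => [|k IHk] y; first by rewrite ball0 => /set1P ->; rewrite eqxx.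
rewrite ballS inE => /orP[yB yu yv | /[1!inE] /exists_inP[x xB exy] yu yv].
  by rewrite ballS inE IHk.
rewrite ballS inE; apply/orP; right; rewrite inE; apply/exists_inP.
have [xu | xu] := eqVneq x u.
  have : y \in nbhd e u :\ v by rewrite !inE yv -xu.
  by rewrite (eqP tw_uv) !inE => /andP[_ evy]; exists v; rewrite ?ball_center.
have [xv | xv] := eqVneq x v; first by exists v; rewrite ?ball_center -?xv.
by exists x; rewrite ?IHk.
Qed.

Lemma twins_sym u v : twins e u v = twins e v u.
Proof. by rewrite /twins eq_sym. Qed.

Lemma dist_set_twins u v (S : {set T}) :
  twins e u v -> u \notin S -> v \notin S -> dist_set e u S = dist_set e v S.
Proof.
move=> tw_uv uS vS; apply: eq_find => k /=.
have nS x w : x \notin S -> w \in S -> w != x by move=> xS wS; apply: contraNneq xS => <-.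
apply/exists_inP/exists_inP => -[w wS wB]; exists w => //.
  exact: mem_ball_twins wB (nS _ _ uS wS) (nS _ _ vS wS).
by rewrite twins_sym in tw_uv; exact: mem_ball_twins wB (nS _ _ vS wS) (nS _ _ uS wS).
Qed.

End Distances.

Section LocatingPartitions.
Variables (T : finType) (e : rel T).

Lemma locating_partition_sep_twins (P : {set {set T}}) u v :
  locating_partition e P -> twins e u v -> u != v -> pblock P u != pblock P v.
Proof.
case/andP=> /and3P[/eqP coverP trivP _] /forallP/(_ u)/forallP/(_ v)/implyP sep tw_uv uv.
have [S SP dS] := exists_inP (sep uv).
have uB : u \in pblock P u by rewrite mem_pblock coverP inE.
apply: contra dS => /eqP B_uv.
have vB : v \in pblock P u by rewrite B_uv mem_pblock coverP inE.
have [-> | SB] := eqVneq S (pblock P u).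
  by move: (dist_set_eq0 e u (pblock P u)) (dist_set_eq0 e v (pblock P u));
     rewrite uB vB => /eqP -> /eqP ->.
have BP : pblock P u \in P by apply: pblock_mem; rewrite coverP inE.
have disjS := trivIsetP trivP S _ SP BP SB.
by rewrite (dist_set_twins tw_uv) ?(disjointFl disjS) ?eqxx.
Qed.

Lemma twins_card_le_locating (W : {set T}) (P : {set {set T}}) :
  {in W &, forall u v, twins e u v} -> locating_partition e P -> #|W| <= #|P|.
Proof.
move=> W_twins locP; have /andP[/and3P[/eqP coverP _ _] _] := locP.
have inj_pblock : {in W &, injective (pblock P)}.
  move=> u v uW vW B_uv; apply/eqP/negPn/negP => uv.
  by move: (locating_partition_sep_twins locP (W_twins u v uW vW) uv); rewrite B_uv eqxx.
rewrite -(card_in_imset inj_pblock); apply/subset_leq_card/subsetP => _ /imsetP[u _ ->].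
by apply: pblock_mem; rewrite coverP inE.
Qed.

Lemma locating_partitionP (P : {set {set T}}) :
  partition P [set: T] ->
  (forall u v, u != v -> pblock P u = pblock P v ->
     exists2 S, S \in P & dist_set e u S != dist_set e v S) ->
  locating_partition e P.
Proof.
move=> partP sep; rewrite /locating_partition partP.
apply/forallP => u; apply/forallP => v; apply/implyP => uv; apply/exists_inP.
have /and3P[/eqP coverP trivP _] := partP.
have [B_uv | B_uv] := eqVneq (pblock P u) (pblock P v); first exact: sep.
exists (pblock P u); first by apply: pblock_mem; rewrite coverP inE.
have /eqP -> : dist_set e u (pblock P u) == 0 by rewrite dist_set_eq0 mem_pblock coverP inE.
by rewrite eq_sym dist_set_eq0 -eq_pblock ?coverP ?inE.
Qed.

End LocatingPartitions.

Lemma mem_pblock_preim (T : finType) (rT : eqType) (f : T -> rT) x y :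
  (y \in pblock (preim_partition f [set: T]) x) = (f x == f y).
Proof. by apply: pblock_equivalence_partition; rewrite ?inE //; split=> // /eqP ->. Qed.

Lemma card_preim_partition (T rT : finType) (f : T -> rT) (D : {set T}) :
  #|preim_partition f D| <= #|f @: D|.
Proof.
by rewrite /preim_partition /equivalence_partition
  (imset_comp (fun r => [set y in D | r == f y]) f) leq_imset_card.
Qed.

Lemma exists_inj_into (T : finType) (A B : {set T}) :
  #|A| <= #|B| -> exists2 g : T -> T, {in A &, injective g} & {in A, forall x, g x \in B}.
Proof.
move=> AB; pose g x := nth x (enum B) (index x (enum A)).
have idx_lt x : x \in A -> index x (enum A) < size (enum B).
  by move=> xA; rewrite -cardE (leq_trans _ AB) // cardE index_mem mem_enum.
exists g => [x y xA yA | x xA]; last by rewrite -mem_enum mem_nth ?idx_lt.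
rewrite /g (set_nth_default y) ?idx_lt // => /eqP; rewrite nth_uniq ?enum_uniq ?idx_lt //.
by move/eqP; apply: index_inj; rewrite ?mem_enum.
Qed.

(* [f] sends every vertex to the vertex of [W] in its class of the partition;
   [w0] is alone in its class. *)
Section TwinPartition.
Variables (T : finType) (e : rel T) (W : {set T}) (w0 : T) (f : T -> T).
Hypotheses (e_sym : symmetric e) (e_irr : irreflexive e).
Hypothesis W_twins : {in W &, forall u v, twins e u v}.
Hypothesis W_indep : {in W &, forall u v, ~~ e u v}.
Hypothesis W_max : forall u, #|twin_class e u| <= #|W|.
Hypothesis w0W : w0 \in W.
Hypothesis f_id : {in W, f =1 id}.
Hypothesis f_out : forall x, x \notin W -> f x \in W :\ w0.
Hypothesis f_inj : {in [predC W] &, injective f}.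

Local Notation P := (preim_partition f [set: T]).

Lemma f_in_W x : f x \in W.
Proof.
by case: (boolP (x \in W)) => [xW | /f_out]; [rewrite f_id | case/setD1P].
Qed.

Lemma f_idem x : f (f x) = f x.
Proof. exact/f_id/f_in_W. Qed.

Lemma f_neq x y : x \notin W -> y \notin W -> x != y -> f x != f y.
Proof. by move=> xW yW; apply: contraNneq => /f_inj ->. Qed.

Lemma pblock_w0 : pblock P w0 = [set w0].
Proof.
apply/setP => z; rewrite mem_pblock_preim f_id // inE eq_sym.
case: (boolP (z \in W)) => [zW | zW]; first by rewrite f_id.
have /setD1P[/negbTE -> _] := f_out zW.
by apply/esym/negbTE; apply: contraNneq zW => ->.
Qed.

Lemma no_edge_pblock x y :
  y \notin W -> {in W, forall w, ~~ e x w} -> ~~ e x y -> {in pblock P y, forall z, ~~ e x z}.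
Proof.
move=> yW xW exy z; rewrite mem_pblock_preim => /eqP fyz.
case: (boolP (z \in W)) => [/xW // | zW].
by rewrite -(f_inj yW zW fyz).
Qed.

Lemma owner_not_twin u : u \notin W -> ~~ twins e (f u) u.
Proof.
move=> uW; apply/negP => tw_u.
have sub : u |: W \subset twin_class e (f u).
  apply/subsetP => x; rewrite !inE => /predU1P[-> // | xW].
  exact: W_twins (f_in_W u) xW.
by have := leq_trans (subset_leq_card sub) (W_max (f u)); rewrite cardsU1 uW ltnn.
Qed.

Lemma pblock_separates a b y :
  y \notin W -> f y != f a -> f y != f b -> e a y ->
  {in W, forall w, ~~ e b w} -> ~~ e b y ->
  dist_set e a (pblock P y) != dist_set e b (pblock P y).
Proof.
move=> yW fya fyb eay bW eby.
apply: (dist_set_adj_neq (s := y)); rewrite ?mem_pblock_preim ?eqxx //.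
exact: no_edge_pblock.
Qed.

Lemma owner_separated u :
  u \notin W -> exists2 S, S \in P & dist_set e u S != dist_set e (f u) S.
Proof.
move=> uW; have fuW := f_in_W u.
have fu_w0 : f u != w0 by have /setD1P[] := f_out uW.
have u_fu : u != f u by apply: contraNneq uW => ->.
have blockP y : pblock P y \in P.
  by rewrite pblock_mem // (cover_partition (preim_partitionP _ _)) inE.
have [/exists_inP[w wW euw] | noWu] := boolP [exists w in W, e u w].
  exists (pblock P w0) => //; rewrite pblock_w0.
  have euw0 : e u w0.
    have [<- // | ww0] := eqVneq w w0.
    have : u \in nbhd e w :\ w0 by rewrite !inE e_sym euw andbT; apply: contraNneq uW => ->.
    by rewrite (eqP (W_twins wW w0W)) !inE e_sym => /andP[].
  apply: (dist_set_adj_neq (s := w0)); rewrite ?set11 ?inE //.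
    by apply: contraNneq uW => ->.
  by move=> z /set1P ->; exact: W_indep.
have uWn : {in W, forall w, ~~ e u w}.
  by move=> w wW; apply: contraNN noWu => euw; apply/exists_inP; exists w.
have fuWn : {in W, forall w, ~~ e (f u) w} by move=> w; exact: W_indep.
have [y] : exists y, (y \in nbhd e (f u) :\ u) != (y \in nbhd e u :\ f u).
  apply/existsP; apply: contraNT (owner_not_twin uW) => /existsPn same.
  by apply/eqP/setP => y; apply/eqP/negPn.
have ne_of_edge x : e x y -> y != x by move=> exy; apply: contraTneq exy => ->; rewrite e_irr.
rewrite !inE; case efy: (e (f u) y); case euy: (e u y) => /=.
- by rewrite (ne_of_edge _ euy) (ne_of_edge _ efy).
- move=> _; have yW : y \notin W by apply: contraTN efy => yW; exact: W_indep.
  have yu : y != u by apply: contraTneq efy => ->; rewrite e_sym uWn.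
  exists (pblock P y) => //; rewrite eq_sym.
  by apply: pblock_separates; rewrite ?f_idem ?efy ?euy // f_neq.
- move=> _; have yW : y \notin W by apply: contraTN euy; exact: uWn.
  exists (pblock P y) => //.
  by apply: pblock_separates; rewrite ?f_idem ?efy ?euy // f_neq ?ne_of_edge.
- by rewrite !andbF.
Qed.

Lemma owner_partition_locating : locating_partition e P.
Proof.
apply: locating_partitionP (preim_partitionP _ _) _ => u v uv B_uv.
have /eqP fuv : f u == f v by rewrite -mem_pblock_preim B_uv mem_pblock_preim.
case: (boolP (u \in W)) => uW; case: (boolP (v \in W)) => vW.
- by move: uv; rewrite -(f_id uW) -(f_id vW) fuv eqxx.
- have [S SP] := owner_separated vW; rewrite -fuv f_id // => sep.
  by exists S; rewrite // eq_sym.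
- by have [S SP] := owner_separated uW; rewrite fuv f_id //; exists S.
- by rewrite (f_inj uW vW fuv) eqxx in uv.
Qed.

Lemma card_owner_partition : #|P| <= #|W|.
Proof.
apply: leq_trans (card_preim_partition _ _) (subset_leq_card _).
by apply/subsetP => _ /imsetP[x _ ->]; exact: f_in_W.
Qed.

End TwinPartition.

Lemma exists_small_locating_partition (T : finType) (e : rel T) (W : {set T}) :
  simple_graph e -> {in W &, forall u v, twins e u v} -> {in W &, forall u v, ~~ e u v} ->
  (forall u, #|twin_class e u| <= #|W|) -> #|T| < 2 * #|W| ->
  exists2 P, locating_partition e P & #|P| <= #|W|.
Proof.
move=> [e_sym e_irr] W_twins W_indep W_max T_lt.
have [w0 w0W] : exists w0, w0 \in W by apply/set0Pn; rewrite -card_gt0; lia.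
have /exists_inj_into[g g_inj gW] : #|~: W| <= #|W :\ w0|.
  by move: (cardsC W) (cardsD1 w0 W); rewrite w0W; lia.
pose f x := if x \in W then x else g x.
have f_id : {in W, f =1 id} by move=> x xW; rewrite /f xW.
have f_out x : x \notin W -> f x \in W :\ w0.
  by move=> xW; rewrite /f (negbTE xW) gW ?inE.
have f_inj : {in [predC W] &, injective f}.
  move=> x y /[!inE] xW yW; rewrite /f (negbTE xW) (negbTE yW).
  by apply: g_inj; rewrite inE.
exists (preim_partition f [set: T]).
  exact: (owner_partition_locating e_sym e_irr W_twins W_indep W_max w0W
            f_id f_out f_inj).
exact: (card_owner_partition f_id f_out).
Qed.

Theorem proposition17 (T : finType) (e : rel T) (W : {set T}) :
  simple_graph e -> connected_graph e ->
  #|T| < 2 * twin_number e ->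
  tau_set e W -> independent e W ->
  partition_dim e = twin_number e.
Proof.
(* Only distances 0 and 1 are ever compared. *)
move=> simple_e _ T_lt /andP[/forall_inP twinsW /eqP cardW] /forall_inP indepW.
have W_twins : {in W &, forall u v, twins e u v}.
  by move=> u v uW; move/forall_inP: (twinsW u uW); apply.
have W_indep : {in W &, forall u v, ~~ e u v}.
  by move=> u v uW; move/forall_inP: (indepW u uW); apply.
have W_max u : #|twin_class e u| <= #|W| by rewrite cardW; exact: leq_bigmax.
rewrite -cardW in T_lt *.
have [P0 locP0 cardP0] :=
  exists_small_locating_partition simple_e W_twins W_indep W_max T_lt.
apply/eqP; rewrite eqn_leq; apply/andP; split.
  apply: leq_trans cardP0; rewrite /partition_dim -minEnat.
  exact: (bigmin_le_cond _ (fun P : {set {set T}} => #|P|) locP0).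
rewrite /partition_dim; elim/big_ind: _ => [| m n | P locP]; first exact: max_card.
  by rewrite leq_min => -> ->.
exact: twins_card_le_locating locP.
Qed.
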